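(* Let $n\ge2$ and let $r$ be even with $0<r\le n$. Consider $A,B\in\mathrm{SGL}_n(\mathbb{F}_2)$ with $B-A=\sum_{i=1}^{r+1}\mathbf{x}_i\mathbf{x}_i^{\top}$, where $\mathbf{x}_1,\ldots,\mathbf{x}_r\in\mathbb{F}_2^n$ are linearly independent and $\mathbf{x}_{r+1}=\sum_{i=1}^r\mathbf{x}_i$. (i) Such $A,B,\mathbf{x}_1,\ldots,\mathbf{x}_r$ with $[\mathbf{x}_i^{\top}A^{-1}\mathbf{x}_j]_{i,j=1}^{r+1}$ not of rank one exist if and only if $(r,n)\notin\{(2,2),(2,3)\}$. (ii) Such $A,B,\mathbf{x}_1,\ldots,\mathbf{x}_r$ with $[\mathbf{x}_i^{\top}A^{-1}\mathbf{x}_j]_{i,j=1}^{r+1}$ of rank one exist if and only if $r\le\lfloor\frac{n+1}{2}\rfloor$.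
   Context: $\mathbb{F}_2$ is the binary field; $\mathrm{SGL}_n(\mathbb{F}_2)$ denotes the set of invertible symmetric $n\times n$ matrices over $\mathbb{F}_2$. *)

From HB Require Import structures.
From mathcomp Require Import all_boot all_order all_algebra.
Set Implicit Arguments. Unset Strict Implicit. Unset Printing Implicit Defensive.
Import GRing.Theory.
Local Open Scope ring_scope.

Definition F2 := 'F_2.

Definition SGL (n : nat) (A : 'M[F2]_n) : Prop := A^T = A /\ A \in unitmx.

Definition lin_indep (n r : nat) (x : 'I_r -> 'cV[F2]_n) : Prop :=
  forall c : 'I_r -> F2, \sum_(i < r) c i *: x i = 0 -> forall i, c i = 0.

(* the family x_1, ..., x_r, x_{r+1} with x_{r+1} = x_1 + ... + x_r;
   index r (the last one of 'I_r.+1) corresponds to x_{r+1} *)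
Definition xext (n r : nat) (x : 'I_r -> 'cV[F2]_n) (i : 'I_r.+1) : 'cV[F2]_n :=
  match unlift ord_max i with
  | Some j => x j
  | None => \sum_(j < r) x j
  end.

Definition config (n r : nat) (A B : 'M[F2]_n) (x : 'I_r -> 'cV[F2]_n) : Prop :=
  SGL A /\ SGL B /\ lin_indep x /\
  B - A = \sum_(i < r.+1) (xext x i *m (xext x i)^T).

Definition gram (n r : nat) (A : 'M[F2]_n) (x : 'I_r -> 'cV[F2]_n) : 'M[F2]_(r.+1) :=
  \matrix_(i < r.+1, j < r.+1) ((xext x i)^T *m invmx A *m xext x j) 0 0.

(* Write X for the n x r matrix with columns x_1, ..., x_r, J for the all-ones r x r
   matrix and N := 1 + J; as r is even, N^2 = 1 over F_2.  The x_i x_i^T sum to X N X^T,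
   and [x_i^T A^-1 x_j] = S^T G S with G := X^T A^-1 X and S = [1 | 1] of full row rank,
   so this Gram matrix has the rank of G.  Comparing the two Schur complements of
   [[A, X], [X^T, N]] shows that B = A + X N X^T is invertible iff G + N is.

   Sylvester's rank inequality gives rank G >= 2r - n, which is the necessity in (ii).
   For r = 2 and n <= 3 a rank other than 1 thus means rank G = 2, i.e. a symmetric
   invertible 2 x 2 matrix G with G + N invertible, impossible as
   det (G + N) = det G + 1.  Conversely, taking
   C := diag(G0, 1) as A^-1 and X := [1; Y] gives G = G0 + Y^T Y, and suitable G0, Y
   realise rank 0 when 2r <= n, rank 1 when 2r <= n + 1, and rank r when r >= 4. *)
From mathcomp Require Import all_boot all_order all_algebra zify.
Import GRing.Theory.
Local Open Scope ring_scope.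
Set Implicit Arguments. Unset Strict Implicit. Unset Printing Implicit Defensive.

Section SchurComplement.

Variable R : comUnitRingType.

Lemma mulmx1_invmx n (A B : 'M[R]_n) : A *m B = 1%:M -> invmx A = B.
Proof.
move=> AB; have [Au _] := mulmx1_unit AB.
by rewrite -[invmx A]mulmx1 -AB mulmxA mulVmx // mul1mx.
Qed.

Lemma det_block_mx_schurl m n (A : 'M[R]_m) (U : 'M_(m, n)) (V : 'M_(n, m)) D :
  A \in unitmx -> \det (block_mx A U V D) = \det A * \det (D - V *m invmx A *m U).
Proof.
move=> Au.
have -> : block_mx A U V D =
    block_mx 1%:M 0 (V *m invmx A) 1%:M *m block_mx A U 0 (D - V *m invmx A *m U).
  by rewrite mulmx_block !mul1mx !mul0mx ?mulmx0 !addr0 mulmxKV // addrCA subrr addr0.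
by rewrite det_mulmx det_lblock det_ublock !det1 !mul1r.
Qed.

Lemma det_block_mx_schurr m n (A : 'M[R]_m) (U : 'M_(m, n)) (V : 'M_(n, m)) D :
  D \in unitmx -> \det (block_mx A U V D) = \det D * \det (A - U *m invmx D *m V).
Proof.
move=> Du.
have -> : block_mx A U V D =
    block_mx 1%:M (U *m invmx D) 0 1%:M *m block_mx (A - U *m invmx D *m V) 0 V D.
  by rewrite mulmx_block !mul1mx ?mul0mx ?mulmx0 ?add0r ?addr0 mulmxKV // -mulmxA subrK.
by rewrite det_mulmx det_ublock det_lblock !det1 !mul1r mulrC.
Qed.

Lemma det_schur_swap m n (A : 'M[R]_m) (D : 'M_n) (U : 'M_(m, n)) (V : 'M_(n, m)) :
  A \in unitmx -> D \in unitmx ->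
  \det A * \det (D - V *m invmx A *m U) = \det D * \det (A - U *m invmx D *m V).
Proof. by move=> Au Du; rewrite -det_block_mx_schurl // det_block_mx_schurr. Qed.

Lemma unitmx_add_mul n p (K : 'M[R]_n) (U : 'M_(n, p)) (V : 'M_(p, n)) :
  K \in unitmx -> V *m invmx K *m U = 0 -> K + U *m V \in unitmx.
Proof.
move=> Ku VKU.
have /mulmx1_unit[] // : (K + U *m V) *m (invmx K - invmx K *m U *m V *m invmx K) = 1%:M.
rewrite mulmxDl !mulmxBr mulmxV // !mulmxA mulmxV // mul1mx.
have -> : U *m V *m invmx K *m U = 0 by rewrite -!mulmxA (mulmxA V) VKU mulmx0.
by rewrite !mul0mx subr0 subrK.
Qed.

End SchurComplement.

Lemma det_mx22 (R : comPzRingType) (M : 'M[R]_2) :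
  \det M = M 0 0 * M 1 1 - M 0 1 * M 1 0.
Proof.
rewrite (expand_det_row _ 0) !big_ord_recl big_ord0 addr0 /cofactor !det_mx11 !mxE /=.
rewrite !expr0 !mul1r expr1 mulN1r mulrN.
have l1 : lift (0 : 'I_2) 0 = 1 by apply/val_inj.
have l2 : lift (1 : 'I_2) 0 = 0 by apply/val_inj.
have l3 : ord0 = (0 : 'I_2) by apply/val_inj.
by rewrite !l3 !l1 l2.
Qed.

Lemma mulmx_sum_col_row (R : pzSemiRingType) m n p (A : 'M[R]_(m, n)) (B : 'M_(n, p)) :
  A *m B = \sum_k col k A *m row k B.
Proof.
apply/matrixP => i j; rewrite summxE !mxE; apply: eq_bigr => k _.
by rewrite !mxE big_ord1 !mxE.
Qed.

Lemma mulmx_entry (R : pzSemiRingType) m n p (A : 'M[R]_(m, n)) (B : 'M_(n, p)) i j :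
  (A *m B) i j = (row i A *m col j B) 0 0.
Proof. by rewrite !mxE; apply: eq_bigr => k _; rewrite !mxE. Qed.

Lemma const_mx1_outer (R : pzSemiRingType) r :
  const_mx 1 = (const_mx 1 : 'cV[R]_r) *m (const_mx 1 : 'rV_r).
Proof. by apply/matrixP => i j; rewrite !mxE big_ord1 !mxE mulr1. Qed.

Lemma mxrank_tr_mul_unit (F : fieldType) m n (C : 'M[F]_n) (X : 'M_(n, m)) :
  C \in unitmx -> (\rank X + \rank X <= \rank (X^T *m C *m X) + n)%N.
Proof.
rewrite -row_full_unit => Cfull.
have := mxrank_mul_min X^T (C *m X).
by rewrite mxrank_tr (eqmxMfull X Cfull) mulmxA leq_subLR addnC.
Qed.

Lemma pchar_F2 : 2 \in [pchar F2].
Proof. exact: pchar_Fp. Qed.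

Lemma oppmx_F2 m n (M : 'M[F2]_(m, n)) : - M = M.
Proof. by apply/matrixP => i j; rewrite mxE oppr_pchar2 // pchar_F2. Qed.

Lemma addmx_F2 m n (M : 'M[F2]_(m, n)) : M + M = 0.
Proof. by rewrite -{2}[M]oppmx_F2 subrr. Qed.

Lemma natr_F2_even k : ~~ odd k -> k%:R = 0 :> F2.
Proof. by move=> ev; apply/eqP; rewrite -(dvdn_pcharf pchar_F2) dvdn2. Qed.

Definition Nmx r : 'M[F2]_r := 1%:M + const_mx 1.

Lemma trmx_Nmx r : (Nmx r)^T = Nmx r.
Proof. by rewrite /Nmx linearD /= trmx1 trmx_const. Qed.

Lemma mulmx_const1_even r :
  ~~ odd r -> (const_mx 1 : 'M[F2]_r) *m (const_mx 1 : 'M_r) = 0.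
Proof.
move=> ev; apply/matrixP => i j; rewrite !mxE.
under eq_bigr do rewrite !mxE mulr1.
by rewrite sumr_const card_ord natr_F2_even.
Qed.

Lemma mulmx_Nmx r : ~~ odd r -> Nmx r *m Nmx r = 1%:M.
Proof.
move=> ev; rewrite /Nmx mulmxDl !mulmxDr mulmx_const1_even // !mul1mx mulmx1 addr0.
by rewrite -addrA addmx_F2 addr0.
Qed.

Lemma invmx_Nmx r : ~~ odd r -> invmx (Nmx r) = Nmx r.
Proof. by move=> ev; apply: mulmx1_invmx; rewrite mulmx_Nmx. Qed.

Lemma unitmx_Nmx r : ~~ odd r -> Nmx r \in unitmx.
Proof. by move=> ev; case: (mulmx1_unit (mulmx_Nmx ev)). Qed.

Section Family.

Variables n r : nat.
Implicit Type x : 'I_r -> 'cV[F2]_n.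

Definition cols_mx x : 'M[F2]_(n, r) := \matrix_(a, j) x j a 0.

Definition gram_cols (A : 'M[F2]_n) x := (cols_mx x)^T *m invmx A *m cols_mx x.

Lemma col_cols_mx x j : col j (cols_mx x) = x j.
Proof. by apply/matrixP => a b; rewrite !mxE (ord1 b). Qed.

Lemma cols_mx_col (X : 'M[F2]_(n, r)) : cols_mx (fun j => col j X) = X.
Proof. by apply/matrixP => a j; rewrite !mxE. Qed.

Lemma sum_scale_cols_mx x (c : 'I_r -> F2) :
  \sum_i c i *: x i = cols_mx x *m \col_i c i.
Proof.
apply/matrixP => a b; rewrite summxE !mxE; apply: eq_bigr => i _.
by rewrite !mxE (ord1 b) mulrC.
Qed.

Lemma lin_indep_row_free x : lin_indep x <-> row_free (cols_mx x)^T.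
Proof.
split=> [li | fr c].
  apply: inj_row_free => v vX; apply/rowP => i; rewrite mxE.
  apply: (li (fun i => v 0 i)); rewrite sum_scale_cols_mx.
  have -> : \col_i v 0 i = v^T by apply/colP => j; rewrite !mxE.
  by rewrite -[cols_mx x]trmxK -trmx_mul vX trmx0.
rewrite sum_scale_cols_mx => /(congr1 trmx); rewrite trmx_mul trmx0 => /eqP.
by rewrite mulmx_free_eq0 // => /eqP/rowP c0 i; have := c0 i; rewrite !mxE.
Qed.

End Family.

(* The columns of [xext_mx r] are e_1, ..., e_r and e_1 + ... + e_r. *)
Definition xext_mx r : 'M[F2]_(r, r.+1) :=
  \matrix_(j, k) if unlift ord_max k is Some i then (j == i)%:R else 1.

Lemma xextE n r (x : 'I_r -> 'cV[F2]_n) k : xext x k = cols_mx x *m col k (xext_mx r).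
Proof.
rewrite /xext; case: unliftP => [j ->|->]; rewrite ?liftK ?unlift_none.
  have -> : col (lift ord_max j) (xext_mx r) = delta_mx j 0.
    by apply/matrixP => a b; rewrite !mxE liftK (ord1 b) eqxx andbT.
  by rewrite -colE col_cols_mx.
apply/matrixP => a b; rewrite !mxE summxE (ord1 b).
by apply: eq_bigr => j _; rewrite !mxE unlift_none mulr1.
Qed.

Lemma mulmx_xext_mx_tr r : xext_mx r *m (xext_mx r)^T = Nmx r.
Proof.
have unlift_widen (k : 'I_r) : unlift ord_max (widen_ord (leqnSn r) k) = Some k.
  have -> : widen_ord (leqnSn r) k = lift ord_max k.
    by apply: val_inj; rewrite /= /bump leqNgt ltn_ord.
  by rewrite liftK.
apply/matrixP => i j; rewrite !mxE big_ord_recr /= !mxE unlift_none mulr1.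
congr (_ + _).
rewrite (bigD1 j) //= !mxE unlift_widen eqxx mulr1 big1 ?addr0 //.
by move=> k /negbTE kj; rewrite !mxE unlift_widen (eq_sym j) kj mulr0.
Qed.

Lemma row_free_xext_mx r : ~~ odd r -> row_free (xext_mx r).
Proof.
move=> ev; rewrite /row_free eqn_leq rank_leq_row /=.
by rewrite -{1}(mxrank_unit (unitmx_Nmx ev)) -mulmx_xext_mx_tr mxrankM_maxl.
Qed.

Lemma sum_xext_outer n r (x : 'I_r -> 'cV[F2]_n) :
  \sum_(i < r.+1) xext x i *m (xext x i)^T = cols_mx x *m Nmx r *m (cols_mx x)^T.
Proof.
rewrite -mulmx_xext_mx_tr mulmxA -mulmxA -trmx_mul mulmx_sum_col_row.
by apply: eq_bigr => k _; rewrite -tr_col !colE xextE colE mulmxA.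
Qed.

Section Gram.

Variables (n r : nat) (A : 'M[F2]_n) (x : 'I_r -> 'cV[F2]_n).

Lemma gram_xext_mx : gram A x = (xext_mx r)^T *m gram_cols A x *m xext_mx r.
Proof.
apply/matrixP => i k; rewrite /gram mxE [RHS]mulmx_entry row_mul -tr_col.
by rewrite !xextE trmx_mul !mulmxA.
Qed.

Lemma rank_gram : ~~ odd r -> \rank (gram A x) = \rank (gram_cols A x).
Proof.
move=> ev; rewrite gram_xext_mx mxrankMfree ?row_free_xext_mx //.
by rewrite -mxrank_tr trmx_mul trmxK mxrankMfree ?row_free_xext_mx // mxrank_tr.
Qed.

End Gram.

(* The two Schur complements of [[A, X], [X^T, N]], using N^-1 = N and -1 = 1. *)
Lemma unitmx_add_XNXt n r (A : 'M[F2]_n) (X : 'M_(n, r)) : ~~ odd r -> A \in unitmx ->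
  (A + X *m Nmx r *m X^T \in unitmx) = (X^T *m invmx A *m X + Nmx r \in unitmx).
Proof.
move=> ev Au; have := det_schur_swap X X^T Au (unitmx_Nmx ev).
rewrite invmx_Nmx // !oppmx_F2 (addrC (Nmx r)) => /(congr1 (fun d => d \is a GRing.unit)).
by rewrite !unitrM -!unitmxE Au unitmx_Nmx.
Qed.

Lemma config_of_sym_unitmx n r (C : 'M[F2]_n) (X : 'M_(n, r)) :
  ~~ odd r -> C^T = C -> C \in unitmx -> row_free X^T ->
  X^T *m C *m X + Nmx r \in unitmx ->
  config (invmx C) (invmx C + X *m Nmx r *m X^T) (fun j => col j X).
Proof.
move=> ev Cs Cu Xfree GNu.
have As : (invmx C)^T = invmx C by rewrite trmx_inv Cs.
have Au : invmx C \in unitmx by rewrite unitmx_inv.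
split; first by split.
split.
  split; first by rewrite [_^T]raddfD /= As !trmx_mul trmxK trmx_Nmx mulmxA.
  by rewrite (unitmx_add_XNXt _ ev Au) invmxK.
split; first by rewrite lin_indep_row_free cols_mx_col.
by rewrite sum_xext_outer cols_mx_col addrAC subrr add0r.
Qed.

Section Config.

Variables (n r : nat) (A B : 'M[F2]_n) (x : 'I_r -> 'cV[F2]_n).
Hypotheses (cf : config A B x) (ev : ~~ odd r).

Lemma unitmx_gram_cols_addN : gram_cols A x + Nmx r \in unitmx.
Proof.
have [[_ Au] [[_ Bu] [_ BA]]] := cf.
by rewrite -unitmx_add_XNXt // -sum_xext_outer -BA addrC subrK.
Qed.

Lemma config_rank_gram_lb : (r + r <= \rank (gram A x) + n)%N.
Proof.
have [[_ Au] [_ [/lin_indep_row_free Xfree _]]] := cf.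
move: Xfree; rewrite /row_free mxrank_tr rank_gram // => /eqP {1 2}<-.
by apply: mxrank_tr_mul_unit; rewrite unitmx_inv.
Qed.

End Config.

(* b^2 = b in F_2, so the two determinants are ad + b and ad + b + 1. *)
Lemma det_add_Nmx2 (G : 'M[F2]_2) : G^T = G -> \det (G + Nmx 2) = \det G + 1.
Proof.
move=> Gs; rewrite !det_mx22 !mxE /=.
have -> : G 1 0 = G 0 1 by rewrite -{1}Gs mxE.
move: (G 0 0) (G 0 1) (G 1 1) => a b d.
by case: a => [[|[|]]] //= ?; case: b => [[|[|]]] //= ?; case: d => [[|[|]]] //= ?;
  apply/val_inj.
Qed.

Lemma sym_unitmx_addN2 (G : 'M[F2]_2) :
  G^T = G -> G \in unitmx -> G + Nmx 2 \in unitmx -> False.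
Proof.
move=> Gs; rewrite !unitmxE det_add_Nmx2 //.
by case: (\det G) => [[|[|]]] //= ?; rewrite !unitfE.
Qed.

Lemma config2_rank_gram n (A B : 'M[F2]_n) (x : 'I_2 -> 'cV[F2]_n) :
  config A B x -> (\rank (gram A x) <= 1)%N.
Proof.
move=> cf; have [[As _] _] := cf.
have GNu := unitmx_gram_cols_addN cf isT.
rewrite rank_gram // leqNgt; apply/negP => rk2.
apply: (sym_unitmx_addN2 _ _ GNu).
  by rewrite !trmx_mul trmxK trmx_inv As mulmxA.
by rewrite -row_free_unit /row_free eqn_leq rank_leq_row.
Qed.

Lemma exists_config_block n r (G0 : 'M[F2]_r) (Y : 'M_(n - r, r)) :
  ~~ odd r -> (r <= n)%N -> G0^T = G0 -> G0 \in unitmx ->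
  G0 + Y^T *m Y + Nmx r \in unitmx ->
  exists A B (x : 'I_r -> 'cV[F2]_n),
    config A B x /\ \rank (gram A x) = \rank (G0 + Y^T *m Y)%R.
Proof.
move=> ev rn G0s G0u GNu.
pose C : 'M[F2]_(r + (n - r)) := block_mx G0 0 0 1%:M.
pose X : 'M[F2]_(r + (n - r), r) := col_mx 1%:M Y.
have XCX : X^T *m C *m X = G0 + Y^T *m Y.
  rewrite tr_col_mx trmx1 mul_row_block mul_row_col !mul1mx !mulmx0.
  by rewrite addr0 add0r !mulmx1.
have Cs : C^T = C by rewrite tr_block_mx G0s !trmx0 trmx1.
have Cu : C \in unitmx by rewrite block_diag_mx_unit G0u unitmx1.
have Xfree : row_free X^T.
  apply/row_freeP; exists (col_mx 1%:M 0).
  by rewrite tr_col_mx trmx1 mul_row_col mul1mx mulmx0 addr0.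
suff : exists A B (x : 'I_r -> 'cV[F2]_(r + (n - r))),
    config A B x /\ \rank (gram A x) = \rank (G0 + Y^T *m Y)%R by rewrite subnKC.
exists (invmx C), (invmx C + X *m Nmx r *m X^T), (fun j => col j X).
split; first by apply: config_of_sym_unitmx ev Cs Cu Xfree _; rewrite XCX.
by rewrite rank_gram // /gram_cols cols_mx_col invmxK XCX.
Qed.

Lemma exists_config_rank0 n r : ~~ odd r -> (r + r <= n)%N ->
  exists A B (x : 'I_r -> 'cV[F2]_n), config A B x /\ \rank (gram A x) = 0%N.
Proof.
move=> ev rrn; have rn : (r <= n - r)%N by lia.
have := exists_config_block (Y := pid_mx r) ev (leq_trans (leq_addr r r) rrn)
  (trmx1 _ _) (unitmx1 _ _).
rewrite tr_pid_mx pid_mx_id // pid_mx_1 addmx_F2 add0r mxrank0.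
by apply; apply: unitmx_Nmx.
Qed.

Lemma exists_config_rank1 n r : ~~ odd r -> (0 < r)%N -> (r + r <= n.+1)%N ->
  exists A B (x : 'I_r -> 'cV[F2]_n), config A B x /\ \rank (gram A x) = 1%N.
Proof.
case: r => [//|s] ev _ rrn; have sn : (s <= n - s.+1)%N by lia.
have rn : (s.+1 <= n)%N by lia.
pose Y : 'M[F2]_(n - s.+1, 1 + s) := row_mx 0 (pid_mx s).
have G1 : 1%:M + Y^T *m Y = pid_mx 1 :> 'M_(1 + s).
  rewrite tr_row_mx trmx0 tr_pid_mx mul_col_row !mul0mx mulmx0 pid_mx_id // pid_mx_1.
  by rewrite [1%:M]scalar_mx_block add_block_mx !addr0 addmx_F2 pid_mx_block.
have := exists_config_block (Y := Y) ev rn (trmx1 _ _) (unitmx1 _ _).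
rewrite G1 rank_pid_mx //; apply.
have -> : pid_mx 1 = (delta_mx 0 0 : 'cV[F2]_(1 + s)) *m (delta_mx 0 0 : 'rV_(1 + s)).
  rewrite mul_delta_mx; apply/matrixP => i j; rewrite !mxE -val_eqE /= andbC.
  by case: i j => [[|i] ?] [[|j] ?].
rewrite addrC; apply: unitmx_add_mul; first exact: unitmx_Nmx.
rewrite invmx_Nmx // -rowE -colE; apply/matrixP => i j.
by rewrite !mxE eqxx (addrr_pchar2 pchar_F2).
Qed.

(* For [admissible K 0], [G := K + const_mx 1] is symmetric and invertible (by
   [unitmx_add_mul]) with [G + Nmx r = K + 1] invertible.  The weight [c] adds up
   under direct sums, so blocks of sizes 2 and 4 reach every even size r >= 4. *)
Definition admissible r (K : 'M[F2]_r) (c : 'M[F2]_1) :=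
  [/\ K^T = K, K \in unitmx, K + 1%:M \in unitmx &
      (const_mx 1 : 'rV_r) *m invmx K *m const_mx 1 = c].

Lemma admissible_block r1 r2 (K : 'M_r1) (W : 'M_r2) c d :
  admissible K c -> admissible W d -> admissible (block_mx K 0 0 W) (c + d).
Proof.
move=> [Ks Ku K1u Kc] [Ws Wu W1u Wd]; split.
- by rewrite tr_block_mx Ks Ws !trmx0.
- by rewrite block_diag_mx_unit Ku Wu.
- by rewrite [1%:M]scalar_mx_block add_block_mx !addr0 block_diag_mx_unit K1u W1u.
rewrite invmx_block_diag ?block_diag_mx_unit ?Ku ?Wu //.
rewrite -row_mx_const -col_mx_const mul_row_block !mulmx0 addr0 add0r mul_row_col.
by rewrite Kc Wd.
Qed.

Lemma admissible_of_inverses r (K Ki Li : 'M[F2]_r) c :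
  K^T = K -> K *m Ki = 1%:M -> (K + 1%:M) *m Li = 1%:M ->
  (const_mx 1 : 'rV_r) *m Ki *m const_mx 1 = c -> admissible K c.
Proof.
move=> Ks KKi KLi Kc; split=> //.
- by case: (mulmx1_unit KKi).
- by case: (mulmx1_unit KLi).
by rewrite (mulmx1_invmx KKi).
Qed.

Definition mx_of_seqs k (l : seq (seq nat)) : 'M[F2]_k :=
  \matrix_(i, j) (nth 0 (nth [::] l i) j)%:R.

Ltac by_entries :=
  apply/matrixP; case=> [[|[|[|[|?]]]] ?] //; case=> [[|[|[|[|?]]]] ?] //;
  do ![rewrite mxE | rewrite big_ord_recr | rewrite big_ord0];
  apply/eqP => //.

Lemma admissible2 : admissible (mx_of_seqs 2 [:: [:: 0; 1]; [:: 1; 1]]) 1.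
Proof.
apply: (@admissible_of_inverses _ _
  (mx_of_seqs 2 [:: [:: 1; 1]; [:: 1; 0]]) (mx_of_seqs 2 [:: [:: 0; 1]; [:: 1; 1]]));
  by by_entries.
Qed.

Lemma admissible4 : admissible (mx_of_seqs 4
  [:: [:: 0; 0; 0; 1]; [:: 0; 0; 1; 0]; [:: 0; 1; 0; 1]; [:: 1; 0; 1; 1]]) 1.
Proof.
apply: (@admissible_of_inverses _ _
  (mx_of_seqs 4 [:: [:: 1; 1; 0; 1]; [:: 1; 0; 1; 0]; [:: 0; 1; 0; 0]; [:: 1; 0; 0; 0]])
  (mx_of_seqs 4 [:: [:: 1; 1; 1; 0]; [:: 1; 0; 1; 1]; [:: 1; 1; 1; 1]; [:: 0; 1; 1; 0]]));
  by by_entries.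
Qed.

Lemma exists_admissible k :
  (exists K : 'M_(4 + k.*2), admissible K 0) /\ (exists K : 'M_(4 + k.*2), admissible K 1).
Proof.
elim: k => [|k [[K0 K0a] [K1 K1a]]].
  split; last by eexists; exact: admissible4.
  have := admissible_block admissible2 admissible2.
  by rewrite addmx_F2 => Ka; eexists; exact: Ka.
split.
  by have := admissible_block admissible2 K1a; rewrite addmx_F2 => Ka; eexists; exact: Ka.
by have := admissible_block admissible2 K0a; rewrite addr0 => Ka; eexists; exact: Ka.
Qed.

Lemma exists_config_full n r : ~~ odd r -> (4 <= r)%N -> (r <= n)%N ->
  exists A B (x : 'I_r -> 'cV[F2]_n), config A B x /\ \rank (gram A x) = r.
Proof.
move=> ev r4 rn; have [k rk] : exists k, r = (4 + k.*2)%N by exists (r./2 - 2)%N; lia.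
subst r; have [[K [Ks Ku K1u Kc]] _] := exists_admissible k.
pose G := K + const_mx 1.
have Gs : G^T = G by rewrite [_^T]raddfD /= Ks trmx_const.
have Gu : G \in unitmx by rewrite /G const_mx1_outer; exact: unitmx_add_mul.
have GNu : G + Nmx _ \in unitmx by rewrite /G /Nmx addrACA addmx_F2 addr0; exact: K1u.
have := exists_config_block (Y := 0) ev rn Gs Gu.
by rewrite trmx0 mul0mx addr0 (mxrank_unit Gu) => /(_ GNu).
Qed.

Unset Implicit Arguments.

Theorem lemma7p2 (n r : nat) :
  (2 <= n)%N -> ~~ odd r -> (0 < r)%N -> (r <= n)%N ->
  ((exists (A B : 'M[F2]_n) (x : 'I_r -> 'cV[F2]_n),
       config A B x /\ \rank (gram A x) <> 1%N)
     <-> ~ ((r, n) = (2%N, 2%N) \/ (r, n) = (2%N, 3%N)))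
  /\
  ((exists (A B : 'M[F2]_n) (x : 'I_r -> 'cV[F2]_n),
       config A B x /\ \rank (gram A x) = 1%N)
     <-> (r <= (n.+1)./2)%N).
Proof.
move=> n2 ev r0 rn; split; split.
- move=> [A [B [x [cf rk]]]] bad.
  have [r2 n3] : r = 2%N /\ (n <= 3)%N by case: bad => [[-> ->]|[-> ->]].
  subst r; have := config_rank_gram_lb cf ev; have := config2_rank_gram cf; lia.
- move=> good; have [rrn|nrr] := leqP (r + r) n.
    have [A [B [x [cf rk]]]] := exists_config_rank0 ev rrn.
    by exists A, B, x; rewrite rk.
  have r4 : (4 <= r)%N.
    rewrite leqNgt; apply/negP => r3; apply: good.
    have -> : r = 2%N by move: ev r0 r3; lia.
    have [->|->] : (n = 2 \/ n = 3)%N by lia.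
      by left.
    by right.
  have [A [B [x [cf rk]]]] := exists_config_full ev r4 rn.
  by exists A, B, x; split=> //; rewrite rk; lia.
- move=> [A [B [x [cf rk]]]]; have := config_rank_gram_lb cf ev; rewrite rk; lia.
- by move=> h; apply: exists_config_rank1 => //; lia.
Qed.
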